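(* Let $U^{(n)}$ be uniformly distributed on $\{1,\dots,n\}$ and put $\widetilde U^{(n)}:=\prod_{p\le n,\ p\ \text{prime}}p^{\mathbbm{1}_{\{\lambda_p(U^{(n)})\ge1\}}}$. Then, as $n\to\infty$, $$\mathbb{E}\bigl(\log U^{(n)}-\log\widetilde U^{(n)}\bigr)^4=O(1)$$ and $$\mathbb{E}\bigl(\log U^{(n)}-\log\widetilde U^{(n)}-\mathbb{E}\log U^{(n)}+\mathbb{E}\log\widetilde U^{(n)}\bigr)^4=O(1).$$
   Context: For a prime $p$ and $k\in\mathbb{N}$, $\lambda_p(k)$ is the exponent of $p$ in the prime factorization of $k$, i.e. $k=\prod_p p^{\lambda_p(k)}$. *)

From mathcomp Require Import all_boot all_order all_algebra.
From mathcomp Require Import reals exp.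
Set Implicit Arguments. Unset Strict Implicit. Unset Printing Implicit Defensive.
Import Order.TTheory GRing.Theory Num.Theory.
Local Open Scope ring_scope.

Definition lambda (p k : nat) : nat := logn p k.

(* tilde U^(n) as a function of the value k of U^(n):
   prod_{p <= n, p prime} p ^ 1_{lambda_p k >= 1} *)
Definition Utilde (n k : nat) : nat :=
  (\prod_(0 <= p < n.+1 | prime p) p ^ (1 <= lambda p k))%N.

(* Expectation of f(U^(n)) for U^(n) uniform on {1,...,n} *)
Definition Eunif (R : realType) (n : nat) (f : nat -> R) : R :=
  n%:R^-1 * \sum_(1 <= k < n.+1) f k.

From mathcomp Require Import all_boot all_order all_algebra.
From mathcomp Require Import reals exp.
From mathcomp Require Import ring lra.
Set Implicit Arguments. Unset Strict Implicit.
Import Order.TTheory GRing.Theory Num.Theory.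

(* Let [B k ^ 2] be the largest square dividing [k <= n].  Every prime factor
   of [k] occurs in [Utilde n k], so [k %| Utilde n k * B k ^ 2] and the gap
   [X k := ln k - ln (Utilde n k)] satisfies [0 <= X k <= 2 ln (B k)].
   Bounding [ln (B k) ^ 4] by the sum over all [d] with [d ^ 2 %| k] and
   counting the [n %/ d ^ 2] multiples of [d ^ 2] up to [n] gives
   [\sum_(k <= n) X k ^ 4 <= 16 n \sum_d ln d ^ 4 / d ^ 2], and
   [ln d ^ 4 <= 8 ^ 4 sqrt d] bounds the series by [3 * 8 ^ 4].  The centred
   moment follows from [(x - c) ^ 4 <= x ^ 4 + c ^ 4] for [x, c >= 0], the
   mean [c] of [X] being at most [1 + E (X ^ 4)]. *)

Section PrimeProducts.
Local Open Scope nat_scope.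
Variable n : nat.

Definition prime_prod (e : nat -> nat) : nat :=
  \prod_(0 <= p < n.+1 | prime p) p ^ e p.

Lemma prime_prod_gt0 e : 0 < prime_prod e.
Proof.
apply: (big_ind (fun x => 0 < x)) => // [a b|p pp]; first by rewrite muln_gt0 => ->.
by rewrite expn_gt0 prime_gt0.
Qed.

Lemma prime_prodD e1 e2 :
  prime_prod e1 * prime_prod e2 = prime_prod (fun p => e1 p + e2 p).
Proof. by rewrite -big_split; apply: eq_bigr => p _; rewrite expnD. Qed.

Lemma dvdn_prime_prod e1 e2 :
  (forall p, prime p -> e1 p <= e2 p) -> prime_prod e1 %| prime_prod e2.
Proof.
move=> le_e; apply: (big_ind2 (fun a b => a %| b)) => // [a b c d|p pp].
  exact: dvdn_mul.
exact/dvdn_exp2l/le_e.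
Qed.

Lemma prime_prod_logn k : 0 < k <= n -> prime_prod (logn ^~ k) = k.
Proof.
case/andP=> k_gt0 le_kn; rewrite -[RHS](partnT k_gt0) (widen_partn _ le_kn).
rewrite /prime_prod big_mkcond; apply: eq_bigr => p _.
by case: ifP => // not_pp; rewrite lognE not_pp.
Qed.

(* For [0 < k <= n], [sqrt_part k ^ 2] is the largest square dividing [k]. *)
Definition sqrt_part (k : nat) : nat := prime_prod (fun p => (logn p k)./2).

Lemma Utilde_prime_prod k : Utilde n k = prime_prod (fun p => 0 < logn p k).
Proof. by []. Qed.

Lemma sqrt_part_sqr k : sqrt_part k ^ 2 = prime_prod (fun p => (logn p k)./2.*2).
Proof.
rewrite /sqrt_part expnS expn1 prime_prodD.
by apply: eq_bigr => p _; rewrite addnn.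
Qed.

Lemma Utilde_dvd k : 0 < k <= n -> Utilde n k %| k.
Proof.
move=> k_range; rewrite -{2}(prime_prod_logn k_range) Utilde_prime_prod.
by apply: dvdn_prime_prod => p _; case: (logn p k).
Qed.

Lemma sqrt_part_sqr_dvd k : 0 < k <= n -> sqrt_part k ^ 2 %| k.
Proof.
move=> k_range; rewrite -{2}(prime_prod_logn k_range) sqrt_part_sqr.
by apply: dvdn_prime_prod => p _; rewrite -{2}(odd_double_half (logn p k)) leq_addl.
Qed.

Lemma dvd_Utilde_sqrt_part k : 0 < k <= n -> k %| Utilde n k * sqrt_part k ^ 2.
Proof.
move=> k_range.
rewrite -{1}(prime_prod_logn k_range) Utilde_prime_prod sqrt_part_sqr prime_prodD.
apply: dvdn_prime_prod => p _; rewrite -{1}(odd_double_half (logn p k)).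
by case: (logn p k) => //= l; rewrite leq_add2r; case: (odd l).
Qed.

Lemma sqrt_part_range k : 0 < k <= n -> 0 < sqrt_part k <= n.
Proof.
move=> /[dup] k_range /andP[k_gt0 le_kn]; rewrite prime_prod_gt0 /=.
apply: leq_trans le_kn; apply: leq_trans (dvdn_leq k_gt0 (sqrt_part_sqr_dvd k_range)).
by rewrite expnS expn1 leq_pmulr // prime_prod_gt0.
Qed.

End PrimeProducts.

Lemma sum_dvdn m n : (0 < m)%N -> (\sum_(1 <= k < n.+1) (m %| k) = n %/ m)%N.
Proof.
move=> m_gt0; elim: n => [|n IHn]; first by rewrite big_geq // div0n.
by rewrite big_nat_recr //= IHn divnS // addnC.
Qed.

Local Open Scope ring_scope.

Section Real.
Variable R : realType.

Lemma ln_pow4_le_sqrt (x : R) : 1 <= x -> ln x ^+ 4 <= 4096 * Num.sqrt x.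
Proof.
move=> x_ge1; have x_gt0 : 0 < x by apply: lt_le_trans x_ge1.
set t := Num.sqrt (Num.sqrt (Num.sqrt x)).
have t_gt0 : 0 < t by rewrite !sqrtr_gt0.
have t2 : t ^+ 2 = Num.sqrt (Num.sqrt x) by rewrite sqr_sqrtr // sqrtr_ge0.
have t4 : t ^+ 4 = Num.sqrt x.
  by rewrite (_ : 4 = 2 * 2)%N // exprM t2 sqr_sqrtr // sqrtr_ge0.
have t8 : t ^+ 8 = x by rewrite (_ : 8 = 4 * 2)%N // exprM t4 sqr_sqrtr // ltW.
have ln_x : ln x = 8 * ln t by rewrite -t8 lnXn // mulr_natl.
have ln_x_le : ln x <= 8 * t by rewrite ln_x; have := ln_sublinear t_gt0; lra.
rewrite -t4 (_ : 4096 = 8 ^+ 4 :> R) ?(natrX R 8 4) // -exprMn.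
by apply: lerXn2r; rewrite // nnegrE ?ln_ge0 // mulr_ge0 // ltW.
Qed.

(* The bound telescopes: [d ^ (-3/2) <= 2 / sqrt (d - 1) - 2 / sqrt d]. *)
Lemma sum_sqrt_div_sqr_le n : (0 < n)%N ->
  \sum_(1 <= d < n.+1) Num.sqrt (d%:R : R) / d%:R ^+ 2 <= 3 - 2 / Num.sqrt n%:R.
Proof.
elim: n => [//|[|n] IHn] _; rewrite big_nat_recr //=.
  by rewrite big_geq // add0r sqrtr1 expr1n !divr1; lra.
have {}IHn := IHn isT.
set a := Num.sqrt (n.+1%:R : R) in IHn *; set b := Num.sqrt (n.+2%:R : R).
have a_gt0 : 0 < a by rewrite sqrtr_gt0 ltr0n.
have b_gt0 : 0 < b by rewrite sqrtr_gt0 ltr0n.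
have b2 : b ^+ 2 = n.+2%:R by rewrite sqr_sqrtr.
have b2_a2 : b ^+ 2 = a ^+ 2 + 1 by rewrite b2 sqr_sqrtr // -natr1.
have le_ab : a <= b by rewrite ler_sqrt ?ler_nat ?ltr0n.
suff : b / b ^+ 2 ^+ 2 + 2 / b <= 2 / a by rewrite -b2; lra.
have num_ge0 : 0 <= 2 * b ^+ 3 - a - 2 * a * b ^+ 2.
  have : (b - a) * (b + a) = 1 by rewrite mulrDr !mulrBl; lra.
  nra.
rewrite -subr_ge0.
have -> : 2 / a - (b / b ^+ 2 ^+ 2 + 2 / b) =
    (2 * b ^+ 3 - a - 2 * a * b ^+ 2) / (a * b ^+ 3).
  by field; rewrite ?gt_eqF.
by rewrite divr_ge0 // mulr_ge0 ?exprn_ge0 // ltW.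
Qed.

Lemma Eunif_ge0 n (f : nat -> R) :
  (forall k, (0 < k <= n)%N -> 0 <= f k) -> 0 <= Eunif n f.
Proof.
move=> f_ge0; rewrite mulr_ge0 ?invr_ge0 // big_nat.
by apply: sumr_ge0 => k; apply: f_ge0.
Qed.

Lemma ler_Eunif n (f g : nat -> R) :
  (forall k, (0 < k <= n)%N -> f k <= g k) -> Eunif n f <= Eunif n g.
Proof.
move=> le_fg; rewrite ler_wpM2l ?invr_ge0 // !big_nat.
by apply: ler_sum => k; apply: le_fg.
Qed.

Lemma EunifD n (f g : nat -> R) :
  Eunif n (fun k => f k + g k) = Eunif n f + Eunif n g.
Proof. by rewrite /Eunif big_split mulrDr. Qed.

Lemma EunifB n (f g : nat -> R) :
  Eunif n (fun k => f k - g k) = Eunif n f - Eunif n g.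
Proof. by rewrite /Eunif sumrB mulrBr. Qed.

Lemma Eunif_cst n (c : R) : (0 < n)%N -> Eunif n (fun=> c) = c.
Proof.
move=> n_gt0; rewrite /Eunif sumr_const_nat subn1 /= -(mulr_natl c).
by rewrite mulKf ?pnatr_eq0 -?lt0n.
Qed.

Lemma Eunif_le_sum n (f : nat -> R) (C : R) : (0 < n)%N ->
  \sum_(1 <= k < n.+1) f k <= C * n%:R -> Eunif n f <= C.
Proof. by move=> n_gt0 le_sum; rewrite /Eunif mulrC ler_pdivrMr ?ltr0n. Qed.

Lemma sum_le_sqr_divisor_sum n (f : nat -> R) (g : nat -> nat) :
  (forall d, 0 <= f d) ->
  (forall k, (0 < k <= n)%N -> (0 < g k <= n)%N /\ (g k ^ 2 %| k)%N) ->
  \sum_(1 <= k < n.+1) f (g k) <= n%:R * \sum_(1 <= d < n.+1) f d / d%:R ^+ 2.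
Proof.
move=> f_ge0 g_sqr_dvd.
apply: (@le_trans _ _ (\sum_(1 <= k < n.+1) \sum_(1 <= d < n.+1)
                         (d ^ 2 %| k)%N%:R * f d)).
  rewrite !big_nat; apply: ler_sum => k /g_sqr_dvd[g_range g_dvd].
  have g_in : g k \in index_iota 1 n.+1 by rewrite mem_index_iota ltnS.
  rewrite (bigD1_seq _ g_in (iota_uniq _ _)) /= g_dvd mul1r lerDl.
  by apply: sumr_ge0 => d _; rewrite mulr_ge0.
rewrite exchange_big_nat mulr_sumr !big_nat; apply: ler_sum => d /andP[d_gt0 _].
have d2_gt0 : (0 < d ^ 2)%N by rewrite expn_gt0 d_gt0.
rewrite -mulr_suml -natr_sum sum_dvdn // mulrCA mulrC ler_wpM2l //.
by rewrite -natrX ler_pdivlMr ?ltr0n // -natrM ler_nat leq_divM.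
Qed.

Lemma exprB_double_le (x c : R) m :
  0 <= x -> 0 <= c -> (x - c) ^+ m.*2 <= x ^+ m.*2 + c ^+ m.*2.
Proof.
wlog le_cx : x c / c <= x => [hwlog x_ge0 c_ge0|x_ge0 c_ge0].
  have [le_cx|/ltW le_xc] := leP c x; first exact: hwlog.
  by rewrite [leRHS]addrC -mul2n !exprM -opprB sqrrN -!exprM mul2n hwlog.
apply: le_trans (_ : _ <= x ^+ m.*2) _; last by rewrite lerDl exprn_ge0.
by rewrite lerXn2r ?nnegrE ?subr_ge0 // lerBlDr lerDl.
Qed.

Definition ln_gap n k : R := ln (k%:R : R) - ln (Utilde n k)%:R.

Lemma ln_gap_bounds n k :
  (0 < k <= n)%N -> 0 <= ln_gap n k <= 2 * ln (sqrt_part n k)%:R.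
Proof.
move=> /[dup] k_range /andP[k_gt0 _].
have U_gt0 : (0 < Utilde n k)%N by apply: prime_prod_gt0.
have B_gt0 : (0 < sqrt_part n k)%N by apply: prime_prod_gt0.
have le_Uk : (Utilde n k <= k)%N by apply: dvdn_leq => //; apply: Utilde_dvd.
have le_kUB : (k <= Utilde n k * sqrt_part n k ^ 2)%N.
  apply: dvdn_leq; last exact: dvd_Utilde_sqrt_part.
  by rewrite muln_gt0 U_gt0 expn_gt0 B_gt0.
rewrite subr_ge0 ler_ln ?posrE ?ltr0n ?ler_nat //=.
rewrite lerBlDl mulr_natl -lnXn ?ltr0n // -lnM ?posrE ?exprn_gt0 ?ltr0n //.
by rewrite ler_ln ?posrE ?mulr_gt0 ?exprn_gt0 ?ltr0n // -natrX -natrM ler_nat le_Uk.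
Qed.

Lemma sum_ln_gap4_le n :
  \sum_(1 <= k < n.+1) ln_gap n k ^+ 4 <= (16 * 4096 * 3) * n%:R.
Proof.
pose f d := 16 * ln (d%:R : R) ^+ 4.
apply: (@le_trans _ _ (\sum_(1 <= k < n.+1) f (sqrt_part n k))).
  rewrite !big_nat; apply: ler_sum => k k_range.
  have /andP[gap_ge0 gap_le] := ln_gap_bounds k_range.
  rewrite /f (_ : 16 = 2 ^+ 4 :> R) ?(natrX R 2 4) // -exprMn.
  by apply: lerXn2r; rewrite ?nnegrE // (le_trans gap_ge0 gap_le).
apply: le_trans (@sum_le_sqr_divisor_sum n f (sqrt_part n) _ _) _ => [d|k k_range|].
- by rewrite /f mulr_ge0 // exprn_even_ge0.
- by split; [apply: sqrt_part_range | apply: sqrt_part_sqr_dvd].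
- rewrite mulrC ler_wpM2r //.
  apply: (@le_trans _ _ (\sum_(1 <= d < n.+1) 16 * 4096 * (Num.sqrt d%:R / d%:R ^+ 2))).
    rewrite !big_nat; apply: ler_sum => d /andP[d_gt0 _].
    rewrite /f mulrA ler_wpM2r ?invr_ge0 ?exprn_ge0 // -mulrA ler_wpM2l //.
    by rewrite ln_pow4_le_sqrt // ler1n.
  rewrite -mulr_sumr ler_wpM2l ?mulr_ge0 //.
  case: n => [|n]; first by rewrite big_geq.
  have := sum_sqrt_div_sqr_le (isT : (0 < n.+1)%N).
  have : 0 <= 2 / Num.sqrt (n.+1%:R : R) by rewrite divr_ge0 ?sqrtr_ge0.
  lra.
Qed.

Lemma Eunif_ln_gap4_le n :
  (0 < n)%N -> Eunif n (fun k => ln_gap n k ^+ 4) <= 16 * 4096 * 3.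
Proof. by move=> n_gt0; apply: Eunif_le_sum n_gt0 (sum_ln_gap4_le n). Qed.

Lemma Eunif_ln_gap_le n : (0 < n)%N -> Eunif n (ln_gap n) <= 16 * 4096 * 3 + 1.
Proof.
move=> n_gt0; apply: le_trans (ler_Eunif (g := fun k => ln_gap n k ^+ 4 + 1) _) _.
  move=> k /ln_gap_bounds/andP[gap_ge0 _].
  have [le_gap1|/ltW ge_gap1] := lerP (ln_gap n k) 1.
    by rewrite -[leLHS]add0r lerD ?exprn_even_ge0.
  by rewrite ler_wpDr // ler_eXnr.
by rewrite EunifD Eunif_cst // lerD2r Eunif_ln_gap4_le.
Qed.

End Real.

Theorem lemma5p3 (R : realType) :
  (exists C : R, exists N : nat, forall n : nat, (N <= n)%N ->
     `| Eunif n (fun k => (ln (k%:R : R) - ln ((Utilde n k)%:R)) ^+ 4) | <= C)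
  /\
  (exists C : R, exists N : nat, forall n : nat, (N <= n)%N ->
     `| Eunif n (fun k => (ln (k%:R : R) - ln ((Utilde n k)%:R)
                          - Eunif n (fun j => ln (j%:R : R))
                          + Eunif n (fun j => ln ((Utilde n j)%:R : R))) ^+ 4) | <= C).
Proof.
split.
  exists (16 * 4096 * 3), 1%N => n n_gt0.
  rewrite ger0_norm ?Eunif_ln_gap4_le //.
  by apply: Eunif_ge0 => k _; apply: exprn_even_ge0.
exists (16 * 4096 * 3 + (16 * 4096 * 3 + 1) ^+ 4), 1%N => n n_gt0.
set c := Eunif n (ln_gap R n).
have c_ge0 : 0 <= c by apply: Eunif_ge0 => k /(ln_gap_bounds R)/andP[].
have c_def : c = Eunif n (fun j => ln (j%:R : R)) - Eunif n (fun j => ln (Utilde n j)%:R).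
  by rewrite /c -EunifB.
rewrite ger0_norm; last by apply: Eunif_ge0 => k _; apply: exprn_even_ge0.
apply: le_trans (ler_Eunif (g := fun k => ln_gap R n k ^+ 4 + c ^+ 4) _) _.
  move=> k /(ln_gap_bounds R)/andP[gap_ge0 _].
  rewrite (_ : _ - _ - _ + _ = ln_gap R n k - c); last by rewrite c_def /ln_gap; ring.
  exact: (exprB_double_le 2).
rewrite EunifD Eunif_cst // lerD ?Eunif_ln_gap4_le //.
by rewrite ler_pXn2r ?nnegrE ?Eunif_ln_gap_le //; lra.
Qed.
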